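(* Let $\psi:\mathbb{N}\to\mathbb{R}_{\ge0}$ satisfy $\lim_{q\to\infty}\psi(q)/q=0$, fix $\delta>0$, and suppose $\psi(q)\ge\delta$ for every $q\in\mathbb{N}$ with $\psi(q)\ne0$. Let $(\mathcal{I}_q)_{q\in\mathbb{N}}$ be any sequence with $\mathcal{I}_q\subseteq\mathbb{Z}_q$. Then the following are equivalent: (a) there exists $\gamma\in\mathbb{R}$ such that $\mu(\limsup_{q\to\infty}E_q^{\mathcal{I}}(\gamma,\psi))=1$; (b) for every $\gamma\in\mathbb{R}$, $\mu(\limsup_{q\to\infty}E_q^{\mathcal{I}}(\gamma,\psi))=1$.
   Context: $\mu$ is Lebesgue measure, $\mathbb{Z}_q=\{0,\dots,q-1\}$, and $\|y\|$ denotes the distance from $y\in\mathbb{R}$ to the nearest integer. For $\gamma\in\mathbb{R}$, $$E_q^{\mathcal{I}}(\gamma,\psi):=\Big\{x\in[0,1]:\Big\|x-\frac{a+\gamma}{q}\Big\|\le\frac{\psi(q)}{q}\text{ for some }a\in\mathcal{I}_q\Big\}.$$ *)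

From HB Require Import structures.
From mathcomp Require Import all_boot all_order all_algebra.
From mathcomp Require Import all_classical all_reals all_analysis.
Set Implicit Arguments. Unset Strict Implicit. Unset Printing Implicit Defensive.
Import Order.TTheory GRing.Theory Num.Theory.
Import numFieldNormedType.Exports.
Local Open Scope classical_set_scope.
Local Open Scope ring_scope.

Definition dist_nint {R : realType} (y : R) : R :=
  Num.min (y - (Num.floor y)%:~R) ((Num.ceil y)%:~R - y).

Definition Eset {R : realType} (I : nat -> set nat) (psi : nat -> R)
    (gamma : R) (q : nat) : set R :=
  [set x | 0 <= x <= 1 /\
     exists a : nat, I q a /\
       dist_nint (x - (a%:R + gamma) / q%:R) <= psi q / q%:R].

Definition limsup_set {R : realType} (E : nat -> set R) : set R :=
  \bigcap_(n in [set: nat]) \bigcup_(k in [set k | (n <= k)%N]) E k.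

(* Moving gamma in steps of length at most delta/2 reduces (a) => (b) to one
   such step gamma -> gamma'.  Points lying in E_q(gamma) only for q with
   psi q = 0 form a countable set, so almost every point x of the limsup set
   for gamma lies in E_q(gamma) for infinitely many q with psi q >= delta.
   The arc of E_q(gamma) containing x has radius r = psi q / q, and shifting
   gamma by at most delta/2 <= psi q / 2 moves it by at most r/2, so
   E_q(gamma') contains a ball of radius r/2 within distance r of x.  Since
   r -> 0, such balls fill a quarter of ball x (2r) at arbitrarily small
   scales, so x is not a density point of the complement of any tail union of
   the E_q(gamma').  By the Lebesgue density theorem almost every point of
   (0,1) then lies in every such tail union, i.e. in the limsup set for
   gamma'. *)

From HB Require Import structures.
From mathcomp Require Import all_boot all_order all_algebra.
From mathcomp Require Import all_classical all_reals all_analysis.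
From mathcomp Require Import ring lra measurable_realfun.
Set Implicit Arguments. Unset Strict Implicit. Unset Printing Implicit Defensive.
Import Order.TTheory GRing.Theory Num.Theory.
Import numFieldNormedType.Exports.
Local Open Scope classical_set_scope.
Local Open Scope ring_scope.

Section dist_nint.
Context {R : realType}.

Lemma dist_nint_le (y : R) (n : int) : dist_nint y <= `|y - n%:~R|.
Proof.
rewrite /dist_nint ge_min; have [nf|fn] := leP n (Num.floor y).
  have nfR : n%:~R <= (Num.floor y)%:~R :> R by rewrite ler_int.
  rewrite ger0_norm ?subr_ge0; last exact: le_trans nfR (floor_le y).
  by rewrite lerB.
have yn : y < n%:~R by rewrite (lt_le_trans (floorD1_gt y)) // ler_int lezD1.
have cn : Num.ceil y <= n by rewrite real_ceil_le_int ?num_real ?ltW.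
by rewrite ltr0_norm ?subr_lt0 // opprB lerD2r ler_int cn orbT.
Qed.

Lemma dist_nint_attained (y : R) : exists n : int, `|y - n%:~R| = dist_nint y.
Proof.
rewrite /dist_nint; have [e|e] := leP (y - (Num.floor y)%:~R) ((Num.ceil y)%:~R - y).
  by exists (Num.floor y); rewrite ger0_norm ?subr_ge0 ?floor_le.
by exists (Num.ceil y); rewrite distrC ger0_norm ?subr_ge0 ?ceil_ge.
Qed.

Lemma dist_nint_leP (y r : R) :
  dist_nint y <= r <-> exists n : int, `|y - n%:~R| <= r.
Proof.
split=> [|[n]]; last exact/le_trans/dist_nint_le.
by have [n <-] := dist_nint_attained y; exists n.
Qed.

Lemma measurable_dist_nint_le (c r : R) :
  measurable [set x : R | dist_nint (x - c) <= r].
Proof.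
have -> : [set x : R | dist_nint (x - c) <= r] =
    \bigcup_(n : int) `[c + n%:~R - r, c + n%:~R + r]%classic.
  apply/seteqP; split=> x /=.
    by move/dist_nint_leP=> [n hn]; exists n; rewrite //= in_itv /= -ler_distl opprD addrA.
  move=> [n _] /=; rewrite in_itv /= -ler_distl => h.
  by apply/dist_nint_leP; exists n; rewrite opprD addrA in h.
exact: countable_bigcupT_measurable.
Qed.

End dist_nint.

Definition tail_union {R : realType} (E : nat -> set R) (N : nat) : set R :=
  \bigcup_(k in [set k | (N <= k)%N]) E k.

Lemma measurable_tail_union {R : realType} (E : nat -> set R) N :
  (forall q, measurable (E q)) -> measurable (tail_union E N).
Proof. by move=> mE; apply: bigcup_measurable => k _. Qed.

Lemma measurable_limsup_set {R : realType} (E : nat -> set R) :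
  (forall q, measurable (E q)) -> measurable (limsup_set E).
Proof. by move=> mE; apply: bigcap_measurableType => N _; exact: measurable_tail_union. Qed.

Lemma measurable_Eset {R : realType} (I : nat -> set nat) (psi : nat -> R) g q :
  measurable (Eset I psi g q).
Proof.
have -> : Eset I psi g q = `[0, 1]%classic `&`
    \bigcup_(a in I q) [set x | dist_nint (x - (a%:R + g) / q%:R) <= psi q / q%:R].
  apply/seteqP; split=> x /=; rewrite in_itv /=.
    by move=> [x01 [a [Ia ha]]]; split=> //; exists a.
  by move=> [x01 [a Ia ha]]; split=> //; exists a.
apply: measurableI; first exact: measurable_itv.
by apply: bigcup_measurable => a _; exact: measurable_dist_nint_le.
Qed.

Lemma Eset_sub01 {R : realType} (I : nat -> set nat) (psi : nat -> R) g q :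
  Eset I psi g q `<=` `[0%R, 1%R].
Proof. by move=> x [/andP[x0 x1] _]; rewrite /= in_itv /= x0 x1. Qed.

Lemma limsup_set_sub {R : realType} (E : nat -> set R) (A : set R) :
  (forall q, E q `<=` A) -> limsup_set E `<=` A.
Proof. by move=> EA x /(_ 0%N Logic.I) [k _ /EA]. Qed.

Section density_balls.
Context {R : realType}.
Local Notation mu := (@lebesgue_measure R).

Lemma lebesgue_measure_ball_diff (x z r s : R) : 0 < s -> ball z s `<=` ball x r ->
  mu (ball x r `\` ball z s) = (r *+ 2 - s *+ 2)%:E.
Proof.
move=> s0 zx; have r0 : 0 < r.
  by have := zx z (ballxx _ s0); rewrite /ball /=; exact/le_lt_trans.
rewrite measureD ?setIidr //=; try exact: measurable_ball.
  by rewrite !lebesgue_measure_ball ?ltW.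
by rewrite lebesgue_measure_ball ?ltry ?ltW.
Qed.

(* A ball of radius r/2 within distance r of x fills a quarter of ball x (2r),
   so it must meet a set of density 1 at x. *)
Lemma density1_meets_balls (A : set R) (x : R) : measurable A ->
  (mu (A `&` ball x r) * (mu (ball x r))^-1 @[r --> 0^'+] --> 1%:E)%E ->
  exists2 e, 0 < e &
    forall r z, 0 < r -> r < e -> `|x - z| <= r -> A `&` ball z (r / 2) !=set0.
Proof.
move=> mA /fine_cvgP[_ /cvgr_gt/(_ (3/4) ltac:(lra))/nbhs_ballP[e /= e0 He]].
exists (e / 2) => [|r z r0 re xz]; first by rewrite divr_gt0.
apply/set0P/eqP => Az0.
have r2 : 0 < r *+ 2 by rewrite mulrn_wgt0.
have ratio34 := He (r *+ 2) ltac:(rewrite /ball /= sub0r normrN gtr0_norm //; lra) r2.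
have zx : ball z (r / 2) `<=` ball x (r *+ 2).
  by move=> y; rewrite /ball /= => zy; have := ler_distD z x y; lra.
have Ax : A `&` ball x (r *+ 2) `<=` ball x (r *+ 2) `\` ball z (r / 2).
  by move=> y [Ay xy]; split=> // zy; rewrite -[False]/(set0 y) -Az0.
have muA3r : (mu (A `&` ball x (r *+ 2)) <= (r * 3)%:E)%E.
  apply: (@le_trans _ _ (mu (ball x (r *+ 2) `\` ball z (r / 2)))).
    apply: le_measure; last exact: Ax; rewrite inE.
    - by apply: measurableI => //; exact: measurable_ball.
    - by apply: measurableD; exact: measurable_ball.
  by rewrite lebesgue_measure_ball_diff ?lee_fin //; lra.
have mfin : mu (A `&` ball x (r *+ 2)) \is a fin_num.
  by rewrite ge0_fin_numE ?measure_ge0 // (le_lt_trans muA3r) ?ltry.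
move: ratio34 muA3r; rewrite -(fineK mfin) lebesgue_measure_ball; last exact: ltW.
rewrite inver ifF; last by apply/negbTE; lra.
rewrite -EFinM /= lee_fin ltr_pdivlMr; lra.
Qed.

End density_balls.

Section unit_interval.
Context {R : realType}.
Local Notation mu := (@lebesgue_measure R).

Lemma lebesgue_measure_itvcc01 : mu `[0%R, 1%R] = 1%E.
Proof. by rewrite lebesgue_measure_itv /= lte_fin ltr01 -EFinB subr0. Qed.

Lemma lebesgue_measure_itvoo01 : mu `]0%R, 1%R[ = 1%E.
Proof. by rewrite lebesgue_measure_itv /= lte_fin ltr01 -EFinB subr0. Qed.

Lemma negligible_itvcc01D (A : set R) : measurable A -> A `<=` `[0%R, 1%R] ->
  mu A = 1%E -> mu.-negligible (`[0%R, 1%R] `\` A).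
Proof.
move=> mA A01 muA; have m01 : measurable (`[0%R, 1%R] : set R) by exact: measurable_itv.
suff muD0 : mu (`[0%R, 1%R] `\` A) = 0%E.
  by apply/negligibleP => //; exact: measurableD.
have := measureDI mu m01 mA; rewrite /= setIidr // muA lebesgue_measure_itvcc01 => /esym.
have : mu (`[0%R, 1%R] `\` A) \is a fin_num.
  rewrite ge0_fin_numE ?measure_ge0 //; apply: (@le_lt_trans _ _ (mu `[0%R, 1%R])).
    apply: le_measure; last exact: subDsetl.
    - by rewrite inE; exact: measurableD.
    - by rewrite inE.
  by rewrite lebesgue_measure_itvcc01 ltry.
by move=> /fineK <-; rewrite -EFinD => -[] h; congr EFin; lra.
Qed.

Lemma measure1_itvoo01D_negligible (A : set R) : measurable A -> A `<=` `[0%R, 1%R] ->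
  mu.-negligible (`]0%R, 1%R[ `\` A) -> mu A = 1%E.
Proof.
move=> mA A01 negA; have m01 : measurable (`]0%R, 1%R[ : set R) by exact: measurable_itv.
have muD0 : mu (`]0%R, 1%R[ `\` A) = 0%E.
  by apply/negligibleP => //; exact: measurableD.
have := measureDI mu m01 mA; rewrite /= muD0 add0e lebesgue_measure_itvoo01 => muI.
apply/eqP; rewrite eq_le; apply/andP; split.
  rewrite -lebesgue_measure_itvcc01; apply: le_measure; last exact: A01.
  - by rewrite inE.
  - by rewrite inE; exact: measurable_itv.
rewrite muI; apply: le_measure; last exact: subIsetr.
- by rewrite inE; exact: measurableI.
- by rewrite inE.
Qed.

End unit_interval.

Section Eset_shift.
Context {R : realType} (psi : nat -> R) (delta : R) (I : nat -> set nat).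
Hypotheses (psi_ge0 : forall q, 0 <= psi q)
  (psi_div_cvg0 : (fun q : nat => psi q / q%:R) @ \oo --> (0 : R))
  (psi_gap : forall q, psi q != 0 -> delta <= psi q)
  (I_lt : forall q a, I q a -> (a < q)%N).
Local Notation mu := (@lebesgue_measure R).
Local Notation E := (Eset I psi).

Lemma negligible_Eset_psi0 g :
  mu.-negligible [set x | exists2 q, psi q = 0 & E g q x].
Proof.
pose f (p : (nat * nat) * int) : R := (p.1.2%:R + g) / p.1.1%:R + p.2%:~R.
have cf : countable (f @` setT).
  exact: sub_countable (card_image_le f setT) (countableP _).
exists (f @` setT); split.
- by apply: countable_measurable cf => t; exact: measurable_set1.
- exact: countable_lebesgue_measure0.
move=> x [q psi0 [_ [a [_]]]]; rewrite psi0 mul0r.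
have [n <-] := dist_nint_attained (x - (a%:R + g) / q%:R).
rewrite normr_le0 subr_eq0 => /eqP xqan.
by exists ((q, a), n) => //; rewrite /f /= -xqan addrC subrK.
Qed.

Lemma Eset_index_gt0 g q x : E g q x -> (0 < q)%N.
Proof. by move=> [_ [a [/I_lt]]]; case: q. Qed.

(* The arcs of E_q(g) have radius psi q / q, so shifting gamma by at most
   psi q / 2 moves their centres by at most half that radius. *)
Lemma Eset_shift_ball g g' q x : `|g' - g| <= psi q / 2 -> E g q x ->
  exists z, `|x - z| <= psi q / q%:R /\
    ball z (psi q / q%:R / 2) `&` `[0%R, 1%R] `<=` E g' q.
Proof.
move=> gg' xq; have q0 : 0 < q%:R :> R by rewrite ltr0n (Eset_index_gt0 xq).
move: xq => [_ [a [Ia]]].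
set c := (a%:R + g) / q%:R; have [n <-] := dist_nint_attained (x - c) => xn.
exists (c + n%:~R); split; first by rewrite opprD addrA.
move=> y [zy y01]; split; first by move: y01; rewrite /= in_itv.
exists a; split => //; apply/dist_nint_leP; exists n.
have -> : y - (a%:R + g') / q%:R - n%:~R = (y - (c + n%:~R)) + (g - g') / q%:R.
  by rewrite /c; field; lra.
apply: le_trans (ler_normD _ _) _.
have yz : `|y - (c + n%:~R)| < psi q / q%:R / 2 by move: zy; rewrite /ball /= distrC.
have gq : `|(g - g') / q%:R| <= psi q / q%:R / 2.
  by rewrite normrM normfV (gtr0_norm q0) distrC mulrAC ler_pM2r ?invr_gt0.
lra.
Qed.

Lemma limsup_Eset_shift_balls g g' x N eta : `|g' - g| <= delta / 2 ->
  limsup_set (E g) x -> ~ (exists2 q, psi q = 0 & E g q x) -> 0 < eta ->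
  exists z r, [/\ 0 < r, r < eta, `|x - z| <= r &
    ball z (r / 2) `&` `[0%R, 1%R] `<=` tail_union (E g') N].
Proof.
move=> gg' xL xZ eta0.
have [M _ Mpsi] := (cvgrPdist_lt _ _).1 psi_div_cvg0 eta eta0.
have [q NMq xq] := xL (maxn N M) Logic.I.
have psiq0 : psi q != 0 by apply/eqP => psiq; apply: xZ; exists q.
have q0 : 0 < q%:R :> R by rewrite ltr0n (Eset_index_gt0 xq).
have gq : `|g' - g| <= psi q / 2 by rewrite (le_trans gg') // ler_pM2r ?psi_gap.
have [z [xz zq]] := Eset_shift_ball gq xq.
exists z, (psi q / q%:R); split => //.
- by rewrite divr_gt0 // lt_def psiq0 psi_ge0.
- have := Mpsi q; rewrite sub0r normrN ger0_norm ?divr_ge0 //.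
  by apply; rewrite /= (leq_trans (leq_maxr N M)).
by move=> y /zq yq; exists q => //; rewrite /= (leq_trans (leq_maxl N M)).
Qed.

Lemma negligible_itvoo01D_tail_union g g' N : `|g' - g| <= delta / 2 ->
  mu (limsup_set (E g)) = 1%E ->
  mu.-negligible (`]0%R, 1%R[ `\` tail_union (E g') N).
Proof.
move=> gg' muL.
set A := `]0%R, 1%R[ `\` tail_union (E g') N.
have mA : measurable A.
  apply: measurableD; first exact: measurable_itv.
  by apply: measurable_tail_union => q; exact: measurable_Eset.
have mL : measurable (limsup_set (E g)).
  by apply: measurable_limsup_set => q; exact: measurable_Eset.
have negL := negligible_itvcc01D mL (limsup_set_sub (@Eset_sub01 _ I psi g)) muL.
apply: negligibleS (negligibleU (negligibleU (lebesgue_density mA) negL)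
  (negligible_Eset_psi0 g)).
move=> x Ax; apply: contrapT => /not_orP[/not_orP[/contrapT xdens xL] xZ].
have [/subset_itv_oo_cc x01 xT] := Ax.
have {}xL : limsup_set (E g) x by apply: contrapT => xL'; apply: xL.
rewrite /= indicE mem_set // in xdens.
have [e e0 Ameets] := density1_meets_balls mA xdens.
have [z [r [r0 re xz zT]]] := limsup_Eset_shift_balls N gg' xL xZ e0.
have [y [[y01 yT] zy]] := Ameets r z r0 re xz.
exact: yT (zT y (conj zy (subset_itv_oo_cc y01))).
Qed.

Lemma limsup_Eset_measure1_shift g g' : `|g' - g| <= delta / 2 ->
  mu (limsup_set (E g)) = 1%E -> mu (limsup_set (E g')) = 1%E.
Proof.
move=> gg' muL; apply: measure1_itvoo01D_negligible.
- by apply: measurable_limsup_set => q; exact: measurable_Eset.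
- by apply: limsup_set_sub => q; exact: Eset_sub01.
apply: negligibleS (negligible_bigcup
  (fun N => negligible_itvoo01D_tail_union N gg' muL)).
move=> x [x01 xL]; apply: contrapT => xT; apply: xL => N _.
by apply: contrapT => xN; apply: xT; exists N => //; split.
Qed.

End Eset_shift.

Lemma small_steps_everywhere {R : realType} (P : R -> Prop) (e : R) : 0 < e ->
  (forall g g', `|g' - g| <= e -> P g -> P g') -> forall g0 g, P g0 -> P g.
Proof.
move=> e0 step g0 g Pg0.
pose n := (Num.truncn (`|g - g0| / e)).+1.
have n0 : 0 < n%:R :> R by rewrite ltr0n.
pose h := (g - g0) / n%:R.
have he : `|h| <= e.
  rewrite /h normrM normfV (gtr0_norm n0) ler_pdivrMr // -ler_pdivrMl //.
  by rewrite mulrC; exact/ltW/truncnS_gt.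
have Pk (k : nat) : P (g0 + k%:R * h).
  elim: k => [|k ih]; first by rewrite mul0r addr0.
  apply: step ih; rewrite (_ : g0 + k.+1%:R * h - (g0 + k%:R * h) = h) //.
  by rewrite -addn1 natrD; ring.
by have := Pk n; rewrite /h mulrC divfK ?gt_eqF // addrC subrK.
Qed.

Theorem mainTheorem8 (R : realType) (psi : nat -> R) (delta : R)
    (I : nat -> set nat) :
  (forall q, 0 <= psi q) ->
  (fun q : nat => psi q / q%:R) @ \oo --> (0 : R) ->
  0 < delta ->
  (forall q, psi q != 0 -> delta <= psi q) ->
  (forall q a, I q a -> (a < q)%N) ->
  (exists gamma : R,
      lebesgue_measure (limsup_set (Eset I psi gamma)) = 1%E) <->
  (forall gamma : R,
      lebesgue_measure (limsup_set (Eset I psi gamma)) = 1%E).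
Proof.
move=> psi_ge0 psi_div_cvg0 delta_gt0 psi_gap I_lt.
split=> [[gamma0 full0] gamma|full]; last by exists 0.
apply: (@small_steps_everywhere R
  (fun g => lebesgue_measure (limsup_set (Eset I psi g)) = 1%E) (delta / 2)) full0.
  by rewrite divr_gt0.
by move=> g g'; exact: limsup_Eset_measure1_shift.
Qed.
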